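(* For every even integer $k \geq 2$ there exists a family $(G_i)_{i\in\mathbb{N}}$ (with $\mathbb{N}=\{0,1,2,\dots\}$) of $k$-degenerate undirected graphs such that $$n(G_i)=\frac{3k+6}{2}+i\,\frac{3k+4}{2}\qquad\text{and}\qquad f(G_i)=\frac{3k-2}{2}+i\,\frac{3k-2}{2}.$$
   Context: All graphs are finite and simple. For a graph $G$, $n(G)$ denotes its number of vertices and $f(G)$ the minimum size of a feedback vertex set, i.e. of a set $F\subseteq V(G)$ such that $G-F$ contains no cycle. An ordering $\phi:V\to\{1,\dots,|V|\}$ (a bijection) is a $k$-elimination ordering if every vertex $v$ has at most $k$ neighbours $u$ with $\phi(u)<\phi(v)$. A graph is $k$-degenerate if it has a $k$-elimination ordering. *)

From mathcomp Require Import all_boot.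
Set Implicit Arguments. Unset Strict Implicit. Unset Printing Implicit Defensive.

Definition simple_graph (T : finType) (e : rel T) : Prop :=
  symmetric e /\ irreflexive e.

(* A cycle in the subgraph induced by A: a duplicate-free sequence of at
   least 3 vertices of A, consecutive ones adjacent and last adjacent to
   first (path.cycle). *)
Definition acyclic_on (T : finType) (e : rel T) (A : {set T}) : Prop :=
  forall s : seq T, uniq s -> 3 <= size s -> all (fun v => v \in A) s ->
    ~~ cycle e s.

Definition is_fvs (T : finType) (e : rel T) (F : {set T}) : Prop :=
  acyclic_on e (~: F).

Definition fvs_number (T : finType) (e : rel T) (m : nat) : Prop :=
  (exists F : {set T}, is_fvs e F /\ #|F| = m) /\
  (forall F : {set T}, is_fvs e F -> m <= #|F|).

(* phi is a k-elimination ordering: a bijection V -> {0,..,|V|-1}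
   (shifted version of {1,..,|V|}) such that every vertex has at most k
   neighbours earlier in the order. *)
Definition elim_ordering (T : finType) (k : nat) (e : rel T)
    (phi : T -> 'I_#|T|) : Prop :=
  bijective phi /\
  forall v : T, #|[set u | e v u & phi u < phi v]| <= k.

Definition degenerate (T : finType) (k : nat) (e : rel T) : Prop :=
  exists phi : T -> 'I_#|T|, elim_ordering k e phi.

From mathcomp Require Import all_boot zify.
Set Implicit Arguments. Unset Strict Implicit. Unset Printing Implicit Defensive.

(* Write k = 2t.  The graph is one vertex followed by i+1 blocks of 3t+2 vertices, whose
   positions 0..3t+1 are split into bottom [0,t], middle [t+1,2t], pivot 2t+1 and top
   [2t+2,3t+1].  In each block the low positions [0,2t] and the high positions [t+1,3t+1]
   span two cliques, and the top of each block is joined to the bottom and the pivot of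
   the next one; the first vertex plays the top of a block 0.  In the vertex order every
   vertex has at most 2t earlier neighbours.
   An acyclic set A meets each clique at most twice, and excluding the triangles and
   4-cycles through a top vertex of the previous block shows that block h+1 contains at
   most 3 + [A meets top h+1] - [A meets top h] vertices of A; telescoping gives
   |A| <= 3i+4.  Conversely positions 0, 1 and 2t+1 of every block, with position 2t+2 of
   the last one, induce a graph of maximum degree 1 on 3i+4 vertices. *)

Section AcyclicSets.
Variables (T : finType) (e : rel T).

Lemma acyclic_on_triangle (A : {set T}) x y z :
  acyclic_on e A -> uniq [:: x; y; z] -> all (mem A) [:: x; y; z] ->
  e x y -> e y z -> e z x -> False.
Proof.
move=> acA uniq_s A_s exy eyz ezx.
by have := acA _ uniq_s isT A_s; rewrite /= exy eyz ezx.
Qed.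

Lemma acyclic_on_clique (A X : {set T}) : acyclic_on e A ->
  {in X &, forall x y, x != y -> e x y} -> #|A :&: X| <= 2.
Proof.
move=> acA clX; rewrite leqNgt; apply/card_gt2P => -[x [y [z [[]]]]].
rewrite !inE => /andP[Ax Xx] /andP[Ay Xy] /andP[Az Xz] [nxy nyz nzx].
apply: (acyclic_on_triangle (x := x) (y := y) (z := z) acA); rewrite ?clX //.
- by rewrite /= !inE !negb_or nxy nyz eq_sym nzx.
- by rewrite /= Ax Ay Az.
Qed.

Lemma acyclic_on_square (A : {set T}) x y z w :
  acyclic_on e A -> uniq [:: x; y; z; w] -> all (mem A) [:: x; y; z; w] ->
  e x y -> e y z -> e z w -> e w x -> False.
Proof.
move=> acA uniq_s A_s exy eyz ezw ewx.
by have := acA _ uniq_s isT A_s; rewrite /= exy eyz ezw ewx.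
Qed.

Lemma acyclic_on_max_deg1 (A : {set T}) : symmetric e ->
  {in A & &, forall x y z, e x y -> e x z -> y = z} -> acyclic_on e A.
Proof.
move=> e_sym deg1 [|x [|y [|z s]]] //= uniq_s _ A_s.
rewrite rcons_path /=; apply/negP => /and4P[exy _ _ ewx].
have w_s : last z s \in z :: s by exact: mem_last.
move: A_s uniq_s => /and4P[Ax Ay Az /allP As] /and4P[_ y_notin _ _].
have Aw : last z s \in A by move: w_s; rewrite inE => /orP[/eqP ->|/As].
rewrite e_sym in ewx.
by move: y_notin; rewrite (deg1 _ _ _ Ax Ay Aw exy ewx) w_s.
Qed.

Lemma fvs_number_compl (A : {set T}) : acyclic_on e A ->
  (forall B : {set T}, acyclic_on e B -> #|B| <= #|A|) ->
  fvs_number e (#|T| - #|A|).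
Proof.
move=> acA maxA; split.
  by exists (~: A); rewrite /is_fvs setCK -(cardsC A) addKn.
move=> F fvsF; have := maxA _ fvsF; have := cardsC F; lia.
Qed.

End AcyclicSets.

Lemma ord_degenerate n k (e : rel 'I_n) :
  (forall v : 'I_n, #|[set u | e v u & u < v]| <= k) -> degenerate k e.
Proof.
move=> earlier; exists (cast_ord (esym (card_ord n))); split=> [|v].
  by exists (cast_ord (card_ord n)); [exact: cast_ordKV | exact: cast_ordK].
exact: earlier.
Qed.

Lemma card_earlier_nbrs n (e : rel 'I_n) (v : 'I_n) (ds : seq nat) :
  (forall u : 'I_n, e v u -> u < v -> v - u \in ds) ->
  #|[set u | e v u & u < v]| <= size ds.
Proof.
move=> dist_ds; set S := [set u | _ & _].
have earlier u : u \in enum S -> u < v by rewrite mem_enum inE => /andP[].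
rewrite cardE -(size_map (fun u : 'I_n => v - u)); apply: uniq_leq_size.
  rewrite map_inj_in_uniq ?enum_uniq // => u1 u2 /earlier lt1 /earlier lt2 eq12.
  by apply: val_inj; move: eq12 lt1 lt2 => /=; lia.
move=> _ /mapP[u Su ->]; move: Su; rewrite mem_enum inE => /andP[].
exact: dist_ds.
Qed.

Section Construction.
Variable t : nat.
Hypothesis t_gt0 : 0 < t.

(* The shift by 3t+1 makes vertex 0 the only vertex of block 0, at the top position 3t+1. *)
Definition block v := (v + (3*t+1)) %/ (3*t+2).
Definition pos v := (v + (3*t+1)) %% (3*t+2).

Lemma block_posE v : v + (3*t+1) = block v * (3*t+2) + pos v.
Proof. exact: divn_eq. Qed.

Lemma pos_lt v : pos v < 3*t+2.
Proof. by rewrite ltn_pmod // addn2. Qed.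

Lemma same_block_dist u v : block u = block v -> u + pos v = v + pos u.
Proof.
move=> buv; have := block_posE u; have := block_posE v; rewrite buv.
move: (block v * _) => b; lia.
Qed.

Lemma next_block_dist u v :
  (block u).+1 = block v -> u + (3*t+2) + pos v = v + pos u.
Proof.
move=> buv; have := block_posE u; have := block_posE v; rewrite -buv [(block u).+1 * _]mulSn.
move: (block u * _) => b; lia.
Qed.

Lemma block_pos_inj u v : block u = block v -> pos u = pos v -> u = v.
Proof. move=> /same_block_dist; lia. Qed.

Lemma block_eq0 v : block v = 0 -> v = 0.
Proof. by move=> bv0; have := block_posE v; have := pos_lt v; rewrite bv0; lia. Qed.

Definition bottom v := pos v <= t.
Definition low v := pos v <= 2*t.
Definition high v := t < pos v.
Definition upper v := 2*t < pos v.
Definition pivot v := pos v == 2*t+1.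
Definition top v := 2*t+1 < pos v.

Lemma bottomE v : bottom v = ~~ high v.
Proof. by rewrite /bottom /high -leqNgt. Qed.

Lemma upperE v : upper v = ~~ low v.
Proof. by rewrite /upper /low -ltnNge. Qed.

Lemma bottom_low v : bottom v -> low v.
Proof. rewrite /bottom /low; lia. Qed.

Lemma upper_high v : upper v -> high v.
Proof. rewrite /upper /high; lia. Qed.

Lemma upper_pivot_top v : upper v = pivot v || top v.
Proof. rewrite /upper /pivot /top; lia. Qed.

Lemma pivot_upper v : pivot v -> upper v.
Proof. by rewrite upper_pivot_top => ->. Qed.

Lemma low_upper_neq u v : low u -> upper v -> u != v.
Proof. by move=> lu; rewrite upperE; apply: contraNneq => <-. Qed.

Lemma blockS_neq u v : (block u).+1 = block v -> u != v.
Proof. by move=> buv; apply/eqP => euv; move: buv; rewrite euv; lia. Qed.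

Lemma top0 : top 0.
Proof. by rewrite /top /pos add0n modn_small; lia. Qed.

Definition jump u v := [&& (block u).+1 == block v, top u & bottom v || pivot v].

Definition adj u v := (u != v) &&
  [|| (block u == block v) && (low u && low v || high u && high v),
      jump u v | jump v u].

Definition block_graph n : rel 'I_n := fun u v => adj u v.
Arguments block_graph : clear implicits.

Lemma adj_sym : symmetric adj.
Proof.
move=> u v; rewrite /adj eq_sym [block v == _]eq_sym [low v && _]andbC [high v && _]andbC.
by case: (jump u v); case: (jump v u); rewrite ?orbT ?orbF.
Qed.

Lemma block_graph_simple n : simple_graph (block_graph n).
Proof. by split=> [u v|u]; [exact: adj_sym | rewrite /block_graph /adj eqxx]. Qed.

Lemma adj_low u v : block u = block v -> low u -> low v -> u != v -> adj u v.
Proof. by move=> buv lu lv nuv; rewrite /adj nuv buv eqxx lu lv. Qed.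

Lemma adj_high u v : block u = block v -> high u -> high v -> u != v -> adj u v.
Proof. by move=> buv hu hv nuv; rewrite /adj nuv buv eqxx hu hv orbT. Qed.

Lemma adj_jump u v : (block u).+1 = block v -> top u -> bottom v || pivot v -> adj u v.
Proof.
move=> buv tu bv; rewrite /adj /jump buv eqxx tu bv orbT andbT.
by rewrite blockS_neq.
Qed.

Definition back_dists v := if pivot v then iota 1 t ++ iota (2*t+2) t else iota 1 (2*t).

Lemma adj_back_dist v u : adj v u -> u < v -> v - u \in back_dists v.
Proof.
case/andP=> _ adj_vu lt_uv; have := pos_lt u; have := pos_lt v.
rewrite /back_dists; case: ifP; rewrite ?mem_cat !mem_iota;
  case/or3P: adj_vu => [/andP[/eqP /same_block_dist] | /and3P[/eqP /next_block_dist] |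
                        /and3P[/eqP /next_block_dist]];
  rewrite /low /high /top /bottom /pivot; lia.
Qed.

Lemma block_graph_degenerate n : degenerate (2*t) (block_graph n).
Proof.
apply: ord_degenerate => v.
apply: leq_trans (card_earlier_nbrs (ds := back_dists v) _) _ => [u|].
  exact: adj_back_dist.
by rewrite /back_dists; case: ifP; rewrite ?size_cat !size_iota //; lia.
Qed.

Section Blocks.
Variable n : nat.

Definition slice h (P : pred nat) : {set 'I_n} := [set v : 'I_n | (block v == h) && P v].
Definition upto h : {set 'I_n} := [set v : 'I_n | block v <= h].
Definition meets_top (A : {set 'I_n}) h := A :&: slice h top != set0.

Lemma upto_succ (A : {set 'I_n}) h :
  #|A :&: upto h.+1| = #|A :&: upto h| + #|A :&: slice h.+1 predT|.
Proof.
rewrite -(cardsID (upto h) (A :&: upto h.+1)); congr (_ + _); apply: eq_card => v.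
  by rewrite !inE -andbA; case: (v \in A) => //=; lia.
by rewrite !inE andbT; case: (v \in A) => //=; lia.
Qed.

Section AcyclicSet.
Variable A : {set 'I_n}.
Hypothesis acA : acyclic_on (block_graph n) A.

Lemma card_low h : #|A :&: slice h low| <= 2.
Proof.
apply: acyclic_on_clique acA _ => x y; rewrite !inE => /andP[/eqP bx lx] /andP[/eqP cy ly].
by apply: adj_low; rewrite ?bx.
Qed.

Lemma card_high h : #|A :&: slice h high| <= 2.
Proof.
apply: acyclic_on_clique acA _ => x y; rewrite !inE => /andP[/eqP bx hx] /andP[/eqP cy hy].
by apply: adj_high; rewrite ?bx.
Qed.

Lemma card_slice h : #|A :&: slice h predT| <= #|A :&: slice h low| + #|A :&: slice h upper|.
Proof.
apply: leq_trans (leq_card_setU _ _).1; apply/subset_leq_card/subsetP => v.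
by rewrite !inE /low /upper; case: (_ \in A) (_ == h) => //=; lia.
Qed.

Lemma card_upper h : #|A :&: slice h upper| <= 1 + meets_top A h.
Proof.
case: (boolP (meets_top A h)) => [_ | /negPn/eqP/setP no_top].
  apply: leq_trans (card_high h); apply/subset_leq_card/setIS/subsetP => v.
  by rewrite !inE => /andP[-> /upper_high].
have pivot_of z : z \in A :&: slice h upper -> pos z = 2*t+1.
  rewrite !inE upper_pivot_top => /and3P[Az bz /orP[/eqP //|tz]].
  by move: (no_top z); rewrite !inE Az bz tz.
apply/card_le1_eqP => x y Ux Uy; apply/val_inj/block_pos_inj; last by rewrite !pivot_of.
by move: Ux Uy; rewrite !inE => /and3P[_ /eqP -> _] /and3P[_ /eqP -> _].
Qed.

Lemma bottom_pair_below_top h w x y : w \in A :&: slice h top ->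
  x \in A :&: slice h.+1 bottom -> y \in A :&: slice h.+1 bottom -> x != y -> False.
Proof.
rewrite !inE => /and3P[Aw /eqP bw tw] /and3P[Ax /eqP bx ox] /and3P[Ay /eqP cy oy] nxy.
apply: (acyclic_on_triangle (x := w) (y := x) (z := y) acA).
- by rewrite /= !inE !negb_or nxy !blockS_neq ?bw.
- by rewrite /= Aw Ax Ay.
- by apply: adj_jump; rewrite ?ox ?bw.
- by apply: adj_low; rewrite ?bx ?bottom_low.
- by rewrite [block_graph _ _ _]adj_sym; apply: adj_jump; rewrite ?oy ?bw.
Qed.

Lemma pivot_notin h w x y z : w \in A :&: slice h top ->
  x \in A :&: slice h.+1 low -> high x -> y \in A :&: slice h.+1 low -> x != y ->
  z \in A :&: slice h.+1 pivot -> False.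
Proof.
rewrite !inE => /and3P[Aw /eqP bw tw] /and3P[Ax /eqP bx lx] hx /and3P[Ay /eqP cy ly] nxy.
move=> /and3P[Az /eqP bz pz]; have uz := pivot_upper pz.
have [nxz nyz] : x != z /\ y != z by split; apply: low_upper_neq.
case: (boolP (high y)) => [hy | oy]; last rewrite -bottomE in oy.
  apply: (acyclic_on_triangle (x := x) (y := y) (z := z) acA).
  - by rewrite /= !inE !negb_or nxy nxz nyz.
  - by rewrite /= Ax Ay Az.
  - by apply: adj_high => //; rewrite bx cy.
  - by apply: adj_high => //; [rewrite cy bz | exact: upper_high].
  - by apply: adj_high => //; [rewrite bz bx | exact: upper_high | rewrite eq_sym].
apply: (acyclic_on_square (x := w) (y := y) (z := x) (w := z) acA).
- by rewrite /= !inE !negb_or (eq_sym y) nxy nyz nxz !andbT !blockS_neq ?bw.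
- by rewrite /= Aw Ax Ay Az.
- by apply: adj_jump; rewrite ?bw ?oy.
- by apply: adj_low => //; [rewrite cy bx | rewrite eq_sym].
- by apply: adj_high => //; [rewrite bx bz | exact: upper_high].
- by rewrite [block_graph _ _ _]adj_sym; apply: adj_jump; rewrite ?bw ?pz ?orbT.
Qed.

Lemma card_upper_below_top h : meets_top A h -> 1 < #|A :&: slice h.+1 low| ->
  #|A :&: slice h.+1 upper| <= meets_top A h.+1.
Proof.
case/set0Pn => w Tw /card_gt1P[x [y []]].
(* One of x, y is a middle vertex: it leaves room for at most one upper vertex in the
   high clique, and that one cannot be the pivot. *)
wlog hx : x y / high x => [gen Lx Ly nxy | Lx Ly nxy].
  case: (boolP (high x)) => [hx | ox]; first exact: gen hx Lx Ly nxy.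
  case: (boolP (high y)) => [hy | oy]; first by apply: (gen y x hy Ly Lx); rewrite eq_sym.
  have Bv v : v \in A :&: slice h.+1 low -> ~~ high v -> v \in A :&: slice h.+1 bottom.
    by rewrite !inE bottomE => /and3P[-> -> _].
  by case: (bottom_pair_below_top Tw (Bv x Lx ox) (Bv y Ly oy) nxy).
have Hx : x \in A :&: slice h.+1 high by move: Lx; rewrite !inE hx => /and3P[-> -> _].
have lx : low x by move: Lx; rewrite !inE => /and3P[].
case: (boolP (meets_top A h.+1)) => [_ | /negPn/eqP/setP no_top].
  have := card_high h.+1; rewrite (cardsD1 x) Hx add1n ltnS; apply: leq_trans.
  apply/subset_leq_card/subsetP => v; rewrite !inE => /and3P[-> -> uv].
  by rewrite upper_high // andbT eq_sym low_upper_neq.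
suff -> : A :&: slice h.+1 upper = set0 by rewrite cards0.
apply/setP => v; rewrite !inE upper_pivot_top; apply/and3P => -[Av bv /orP[pv | tv]].
  by apply: (pivot_notin (z := v) Tw Lx hx Ly nxy); rewrite !inE Av bv.
by move: (no_top v); rewrite !inE Av bv tv.
Qed.

Lemma card_slice_succ h :
  #|A :&: slice h.+1 predT| + meets_top A h <= 3 + meets_top A h.+1.
Proof.
have := card_slice h.+1; have := card_low h.+1; have := card_upper h.+1.
have := @card_upper_below_top h; case: (meets_top A h) (meets_top A h.+1) => [] [] /=; lia.
Qed.

Lemma card_upto0 : #|A :&: upto 0| <= meets_top A 0.
Proof.
have sub : A :&: upto 0 \subset A :&: slice 0 top.
  apply/subsetP => v; rewrite !inE leqn0 => /andP[-> /eqP b0].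
  by rewrite b0 (block_eq0 b0) top0.
have le1 : #|A :&: slice 0 top| <= 1.
  apply/card_le1_eqP => x y; rewrite !inE.
  move=> /and3P[_ /eqP /block_eq0 x0 _] /and3P[_ /eqP /block_eq0 y0 _].
  by apply: val_inj; rewrite /= x0 y0.
rewrite /meets_top -card_gt0; have := subset_leq_card sub; lia.
Qed.

Lemma card_upto h : #|A :&: upto h| <= 3 * h + meets_top A h.
Proof.
elim: h => [|h IH]; first by rewrite muln0 card_upto0.
rewrite upto_succ; have := card_slice_succ h; lia.
Qed.

End AcyclicSet.

Variable i : nat.
Hypothesis n_eq : n = 3*t+3 + i*(3*t+2).

Lemma block_le (v : 'I_n) : block v <= i.+1.
Proof.
rewrite /block -ltnS ltn_divLR ?addn2 // [i.+2 * _]mulSn [i.+1 * _]mulSn.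
by have := ltn_ord v; move: (nat_of_ord v) => m; rewrite n_eq; lia.
Qed.

Lemma acyclic_card_le (A : {set 'I_n}) : acyclic_on (block_graph n) A -> #|A| <= 3*i + 4.
Proof.
move=> acA; have -> : A = A :&: upto i.+1.
  by apply/esym/setIidPl/subsetP => v _; rewrite inE block_le.
by have := card_upto acA i.+1; case: (meets_top A i.+1) => /=; lia.
Qed.

Lemma exists_vertex g p : g <= i -> p < 3*t+2 ->
  exists v : 'I_n, block v = g.+1 /\ pos v = p.
Proof.
move=> le_gi lt_p.
have lt_vn : g * (3*t+2) + p + 1 < n.
  have : g * (3*t+2) <= i * (3*t+2) by rewrite leq_mul2r le_gi orbT.
  by rewrite n_eq; lia.
have vE : g * (3*t+2) + p + 1 + (3*t+1) = g.+1 * (3*t+2) + p.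
  by rewrite [g.+1 * _]mulSn; lia.
exists (Ordinal lt_vn); rewrite /block /pos /= vE modnMDl modn_small //.
by rewrite divnMDl ?divn_small ?addn0 //; lia.
Qed.

Definition forest_pos v :=
  [|| pos v == 0, pos v == 1, pivot v | (block v == i.+1) && (pos v == 2*t+2)].

Definition forest : {set 'I_n} := [set v : 'I_n | (block v != 0) && forest_pos v].

Lemma forest_adj (u v : 'I_n) : u \in forest -> v \in forest -> adj u v ->
  block u = block v /\ (pos u + pos v = 1 \/ pos u + pos v = 4*t+3).
Proof.
have := block_le u; have := block_le v.
rewrite !inE /forest_pos /pivot => bu bv Fu Fv /andP[nuv /or3P[/andP[/eqP buv cl] | J | J]].
- have := contra_neq (block_pos_inj buv) nuv.
  by move: Fu Fv cl; rewrite /low /high; split=> //; lia.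
- by move: J Fu; rewrite /jump /top; lia.
- by move: J Fv; rewrite /jump /top; lia.
Qed.

Lemma forest_acyclic : acyclic_on (block_graph n) forest.
Proof.
apply: acyclic_on_max_deg1; first exact: adj_sym.
move=> x y z Fx Fy Fz exy exz.
have [bxy pxy] := forest_adj Fx Fy exy; have [bxz pxz] := forest_adj Fx Fz exz.
apply/ord_inj/block_pos_inj; first by rewrite -bxy.
by move: pxy pxz (pos_lt y) (pos_lt z); lia.
Qed.

Lemma card_forest_slice g : g <= i -> 3 + (g == i) <= #|forest :&: slice g.+1 predT|.
Proof.
move=> le_gi.
have : [/\ 0 < 3*t+2, 1 < 3*t+2, 2*t+1 < 3*t+2 & 2*t+2 < 3*t+2] by split; lia.
case=> /(exists_vertex le_gi)[v0 [b0 p0]] /(exists_vertex le_gi)[v1 [b1 p1]]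
       /(exists_vertex le_gi)[v2 [b2 p2]] /(exists_vertex le_gi)[v3 [b3 p3]].
pose s := [:: v0, v1, v2 & if g == i then [:: v3] else [::]].
have uniq_s : uniq s.
  apply: (@map_uniq _ _ (fun v : 'I_n => pos v)).
  by rewrite /s; case: (g == i); rewrite /= !inE p0 p1 p2 ?p3; lia.
have -> : 3 + (g == i) = size s by rewrite /s; case: (g == i).
rewrite -(card_uniqP uniq_s); apply/subset_leq_card/subsetP/allP.
by rewrite /s; case: (g =P i) => [gi|_] /=;
  rewrite !inE /forest_pos /pivot b0 b1 b2 ?b3 p0 p1 p2 ?p3; lia.
Qed.

Lemma card_forest : 3*i + 4 <= #|forest|.
Proof.
have card_upto_forest m : m <= i -> 3 * m <= #|forest :&: upto m|.
  elim: m => [|m IH] lt_mi //; rewrite upto_succ.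
  by have := IH (ltnW lt_mi); have := card_forest_slice (ltnW lt_mi); lia.
apply: leq_trans (subset_leq_card (subsetIl forest (upto i.+1))).
rewrite upto_succ; have := card_upto_forest i (leqnn i).
by have := card_forest_slice (leqnn i); lia.
Qed.

Lemma block_graph_fvs_number : fvs_number (block_graph n) (n - (3*i + 4)).
Proof.
have card_forestE : #|forest| = 3*i + 4.
  by apply/eqP; rewrite eqn_leq card_forest (acyclic_card_le forest_acyclic).
rewrite -card_forestE -[X in X - _]card_ord; apply: fvs_number_compl forest_acyclic _.
by move=> B /acyclic_card_le; rewrite card_forestE.
Qed.

End Blocks.

End Construction.

Theorem mainTheorem1 (k : nat) : 2 <= k -> ~~ odd k ->
  exists G : forall i : nat, rel 'I_((3 * k + 6) %/ 2 + i * ((3 * k + 4) %/ 2)),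
    forall i : nat,
      simple_graph (G i) /\ degenerate k (G i) /\
      fvs_number (G i) ((3 * k - 2) %/ 2 + i * ((3 * k - 2) %/ 2)).
Proof.
move=> k_ge2 k_even.
have [t k2t] : exists t, k = 2 * t.
  by exists k./2; rewrite mul2n -{1}(odd_double_half k) (negbTE k_even).
subst k; have t_gt0 : 0 < t by lia.
exists (fun i => @block_graph t _) => i.
have -> : (3 * (2 * t) + 6) %/ 2 = 3*t + 3 by lia.
have -> : (3 * (2 * t) + 4) %/ 2 = 3*t + 2 by lia.
have -> : (3 * (2 * t) - 2) %/ 2 = 3*t - 1 by lia.
split; first exact: block_graph_simple.
split; first exact: block_graph_degenerate.
have -> : 3*t - 1 + i * (3*t - 1) = 3*t + 3 + i * (3*t + 2) - (3*i + 4) by nia.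
exact: (block_graph_fvs_number t_gt0 (n := 3*t + 3 + i * (3*t + 2)) (i := i)).
Qed.
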